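(* Let $G$ be a finite abelian group, $\mathcal M=(M,\preceq)$ a $\hat G$-linear monoid with partial order satisfying conditions (1)–(3) below, and $k$ a field. Then the extension of scalars functor $-\otimes k:\mathrm{Rep}(M,\hat G)\to k[M]\text{-}\mathrm{mod}$ restricts to a functor $-\otimes k:\mathrm{Rep}(\mathcal M,\hat G)\to k[\mathcal M]\text{-}\mathrm{mod}$.
   Context: $\hat G=G\sqcup\{0\}$ with $0$ absorbing. $\mathrm{Vect}_{\hat G}$: objects are finite pointed sets with an action of $\hat G$ ($0v=0$, $g0=0$) such that $G$ acts freely on nonzero elements; morphisms $f$ satisfy $f(0)=0$, $f(gv)=gf(v)$, $f(v_1)=f(v_2)\neq0\Rightarrow Gv_1=Gv_2$. A $\hat G$-linear monoid is a finite monoid $M$ with absorbing element $0_M$ containing $G$ as a subgroup of units commuting with all of $M$, with $G$ acting freely by translation on $M\setminus\{0_M\}$. $\mathrm{Rep}(M,\hat G)$: objects $V$ of $\mathrm{Vect}_{\hat G}$ with an action $a\mapsto V(a)$ of $M$ by morphisms of $\mathrm{Vect}_{\hat G}$, $0_M$ acting as zero and $g\in G$ as scalar $g$. On $\mathrm{End}_{\hat G}(V)$: $A\le B$ iff for all $x$, $Ax\neq0\Rightarrow Bx=Ax$. $\preceq$ is a partial order on $M$ with: (1) $0_M$ the unique minimal element; (2) whenever $\bigvee_{a\in I}a$ exists, $x(\bigvee a)=\bigvee xa$ and $(\bigvee a)x=\bigvee ax$ for all $x$; (3) the same for meets. $\mathrm{Rep}(\mathcal M,\hat G)$ is the full subcategory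 of $V\in\mathrm{Rep}(M,\hat G)$ such that whenever $\bigvee_{a\in I}a$ exists in $M$, $\bigvee_{a\in I}V(a)$ exists in $\mathrm{End}_{\hat G}(V)$ and equals $V(\bigvee_{a\in I}a)$. A complete system of orthogonal idempotents is a finite set $E=\{e_1,\dots,e_m\}\subseteq M$ with $e_ie_j=\delta_{ij}e_j$ and $1=\bigvee_i e_i$; $\mathcal C(M)$ is the set of these. $k[M]$ is the monoid algebra and $k[\mathcal M]=k[M]/(a-\sum_{e\in E}ae,\ a-\sum_{e\in E}ea\mid a\in M, E\in\mathcal C(M))$. For $V\in\mathrm{Rep}(M,\hat G)$, $V\otimes k$ is the $k$-vector space with basis $V\setminus\{0\}$, on which $a\in M$ acts by $v\mapsto av$ if $av\neq0$ and $v\mapsto0$ otherwise, and morphisms are extended linearly in the same way. *)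

From HB Require Import structures.
From mathcomp Require Import all_boot all_order all_fingroup all_algebra.
Set Implicit Arguments. Unset Strict Implicit. Unset Printing Implicit Defensive.
Import GRing.Theory.
Local Open Scope ring_scope.

Definition hatG_linear_monoid (gT : finGroupType) (M : finType)
  (mul : M -> M -> M) (one zero : M) (iota : gT -> M) : Prop :=
  [/\ [/\ associative mul, left_id one mul & right_id one mul],
      left_zero zero mul /\ right_zero zero mul,
      [/\ iota 1%g = one, (forall g h, iota (g * h)%g = mul (iota g) (iota h)) & injective iota],
      (forall g m, mul (iota g) m = mul m (iota g))
    & (forall g m, m != zero -> mul (iota g) m = m -> g = 1%g)].

Definition is_join (T : finType) (le : rel T) (I : {set T}) (j : T) : Prop :=
  (forall a, a \in I -> le a j) /\
  (forall u, (forall a, a \in I -> le a u) -> le j u).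

Definition is_meet (T : finType) (le : rel T) (I : {set T}) (j : T) : Prop :=
  (forall a, a \in I -> le j a) /\
  (forall u, (forall a, a \in I -> le u a) -> le u j).

Definition monoid_order (M : finType) (mul : M -> M -> M) (zero : M)
  (le : rel M) : Prop :=
  [/\ [/\ reflexive le, antisymmetric le & transitive le],
      (forall x, le x zero -> x = zero) /\
      (forall m, (forall x, le x m -> x = m) -> m = zero),
      (forall (I : {set M}) j, is_join le I j -> forall x,
          is_join le [set mul x a | a in I] (mul x j) /\
          is_join le [set mul a x | a in I] (mul j x))
    &
      (forall (I : {set M}) j, is_meet le I j -> forall x,
          is_meet le [set mul x a | a in I] (mul x j) /\
          is_meet le [set mul a x | a in I] (mul j x))].

(* An object of Vect_{\hat G}: finite pointed set (V, z) with \hat G-action,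
   g acting by gact g and 0 acting as the constant z. *)
Definition vectG_obj (gT : finGroupType) (V : finType) (z : V)
  (gact : gT -> V -> V) : Prop :=
  [/\ forall v, gact 1%g v = v,
      forall g h v, gact (g * h)%g v = gact g (gact h v),
      forall g, gact g z = z
    & forall g v, v != z -> gact g v = v -> g = 1%g].

Definition vectG_mor (gT : finGroupType) (V W : finType) (zV : V) (zW : W)
  (gV : gT -> V -> V) (gW : gT -> W -> W) (f : V -> W) : Prop :=
  [/\ f zV = zW,
      forall g v, f (gV g v) = gW g (f v)
    & forall v1 v2, f v1 = f v2 -> f v1 != zW -> exists g, v1 = gV g v2].

Definition endle (V : finType) (z : V) (A B : V -> V) : Prop :=
  forall x, A x != z -> B x = A x.

Definition rep_obj (gT : finGroupType) (M : finType) (mul : M -> M -> M)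
  (one zero : M) (iota : gT -> M) (V : finType) (z : V) (act : M -> V -> V)
  : Prop :=
  [/\ vectG_obj z (fun g => act (iota g)),
      forall v, act one v = v,
      forall a b v, act (mul a b) v = act a (act b v),
      forall v, act zero v = z
    & forall a, vectG_mor z z (fun g => act (iota g)) (fun g => act (iota g)) (act a)].

Definition rep_mor (gT : finGroupType) (M : finType) (iota : gT -> M)
  (V W : finType) (zV : V) (zW : W) (actV : M -> V -> V) (actW : M -> W -> W)
  (f : V -> W) : Prop :=
  vectG_mor zV zW (fun g => actV (iota g)) (fun g => actW (iota g)) f /\
  forall a v, f (actV a v) = actW a (f v).

Definition repM_obj (gT : finGroupType) (M : finType) (mul : M -> M -> M)
  (one zero : M) (iota : gT -> M) (le : rel M)
  (V : finType) (z : V) (act : M -> V -> V) : Prop :=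
  rep_obj mul one zero iota z act /\
  forall (I : {set M}) j, is_join le I j ->
    let isEnd := vectG_mor z z (fun g => act (iota g)) (fun g => act (iota g)) in
    [/\ isEnd (act j),
        forall a, a \in I -> endle z (act a) (act j)
      & forall B, isEnd B -> (forall a, a \in I -> endle z (act a) B) ->
          endle z (act j) B].

Definition complete_orth_idem (M : finType) (mul : M -> M -> M)
  (one zero : M) (le : rel M) (E : {set M}) : Prop :=
  (forall e e', e \in E -> e' \in E -> mul e e' = if e == e' then e' else zero)
  /\ is_join le E one.

(* V (x) k: the k-vector space with basis V \ {z}, i.e. functions on the
   nonzero elements. *)
Notation nz z := {v | v != z}.

Notation tens k z := {ffun nz z -> (k : fieldType)^o}.

(* the linear extension of a pointed map f : V -> W: e_v |-> e_{f v} if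
   f v <> 0, and 0 otherwise *)
Definition tmap (k : fieldType) (V W : finType) (zV : V) (zW : W)
  (f : V -> W) (x : tens k zV) : tens k zW :=
  [ffun w : nz zW => \sum_(v : nz zV | f (val v) == val w) x v].
Arguments tmap {k V W} zV zW f x.

From HB Require Import structures.
From mathcomp Require Import all_boot all_order all_fingroup all_algebra.
Import GRing.Theory.
Local Open Scope ring_scope.

(* Extension of scalars is linear and functorial on pointed maps, so what
   remains is the defining relations a = sum_e a e = sum_e e a of k[\mathcal M].
   Let V be in Rep(\mathcal M, \hat G) and E a complete system of orthogonal
   idempotents. Since V(e) <= V(1) = id, each e in E sends a nonzero v to v or
   to 0, and orthogonality lets at most one e fix v. Some e does fix v: the
   endomorphism that kills the orbit Gv and fixes everything else would
   otherwise dominate every V(e), hence their join V(1) = id, which is absurd.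
   So on the basis of V (x) k the maps V(a) and sum_e V(a e), resp.
   sum_e V(e a), agree. *)

Section ExtensionOfScalars.

Variable k : fieldType.

Lemma tmap_is_linear (V W : finType) (zV : V) (zW : W) (f : V -> W) :
  linear (tmap (k := k) zV zW f).
Proof.
move=> c x y; apply/ffunP => w; rewrite !ffunE scaler_sumr -big_split /=.
by apply: eq_bigr => v _; rewrite !ffunE.
Qed.

Lemma eq_tmap {V W : finType} {zV : V} {zW : W} {f g : V -> W} :
  f =1 g -> tmap (k := k) zV zW f =1 tmap zV zW g.
Proof. by move=> fg x; apply/ffunP => w; rewrite !ffunE; apply: eq_bigl => v; rewrite fg. Qed.

Lemma tmap_id (V : finType) (z : V) (x : tens k z) : tmap z z id x = x.
Proof. by apply/ffunP => w; rewrite ffunE (big_pred1 w). Qed.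

Lemma tmap_comp (U V W : finType) (zU : U) (zV : V) (zW : W)
    (f : U -> V) (g : V -> W) (x : tens k zU) :
  g zV = zW -> tmap zV zW g (tmap zU zV f x) = tmap zU zW (g \o f) x.
Proof.
move=> gz; apply/ffunP => w; rewrite !ffunE.
have wz : val w != zW := valP w.
under eq_bigr do rewrite ffunE big_mkcond.
rewrite exchange_big /= [RHS]big_mkcond; apply: eq_bigr => u _ /=.
have [fu|fu] := eqVneq (f (val u)) zV.
  rewrite fu gz eq_sym (negbTE wz) big1 // => v _.
  by case: ifP => // /eqP fv; have /eqP[] := valP v; apply/esym.
case: eqP => [gw|ngw]; last first.
  by apply: big1 => v /eqP gv; case: ifP => // /eqP fv; case: ngw; rewrite fv.
rewrite (bigD1 (exist (fun v => v != zV) _ fu)) /= ?gw ?eqxx // big1 ?addr0 //.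
move=> v /andP[_ nv]; case: ifP => // /eqP fv.
by move: nv; rewrite -val_eqE /= fv eqxx.
Qed.

Lemma tmap_sum_partition (V I : finType) (z : V) (E : {set I})
    (F : V -> V) (Fe : I -> V -> V) (x : tens k z) :
  (forall v, v != z -> exists2 e0, e0 \in E &
     forall e, e \in E -> Fe e v = if e == e0 then F v else z) ->
  tmap z z F x = \sum_(e in E) tmap z z (Fe e) x.
Proof.
move=> partE; apply/ffunP => w; rewrite sum_ffunE ffunE.
under [RHS]eq_bigr do rewrite ffunE big_mkcond.
rewrite exchange_big big_mkcond /=; apply: eq_bigr => v _.
have [e0 e0E Fe_v] := partE _ (valP v).
rewrite (bigD1 e0) //= Fe_v ?eqxx // big1 ?addr0 // => e /andP[eE ne].
rewrite Fe_v // (negbTE ne).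
by case: eqP => // zw; have /eqP[] := valP w; apply/esym.
Qed.

End ExtensionOfScalars.

Section IdempotentsOnRepresentations.

Context {gT : finGroupType} {M : finType} {mul : M -> M -> M} {one zero : M}.
Context {iota : gT -> M} {le : rel M} {V : finType} {z : V} {act : M -> V -> V}.
Hypothesis repV : repM_obj mul one zero iota le z act.

Let isEnd := vectG_mor z z (fun g => act (iota g)) (fun g => act (iota g)).

Lemma act_zero_vec a : act a z = z.
Proof. by case: repV => -[_ _ _ _ /(_ a)[]]. Qed.

Definition kill_orbit (v x : V) : V :=
  if [exists g, x == act (iota g) v] then z else x.

Lemma kill_orbit_is_end v : isEnd (kill_orbit v).
Proof.
case: repV => -[[act1 actM _ _] _ _ _ _] _.
have orbitJ g x : [exists h, act (iota g) x == act (iota h) v] =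
                  [exists h, x == act (iota h) v].
  apply/existsP/existsP => -[h /eqP xh].
    by exists (g^-1 * h)%g; rewrite actM -xh -actM mulVg act1.
  by exists (g * h)%g; rewrite xh actM.
rewrite /isEnd /kill_orbit; split.
- by case: ifP.
- by move=> g x; rewrite orbitJ; case: ifP => _; rewrite ?act_zero_vec.
move=> v1 v2; case: ifP => _; first by rewrite eqxx.
by case: ifP => [_ -> |_ -> _]; [rewrite eqxx | exists 1%g; rewrite act1].
Qed.

Lemma act_join_one_fix {I : {set M}} {a : M} :
  is_join le I one -> a \in I -> forall v, act a v != z -> act a v = v.
Proof.
case: repV => -[_ act1 _ _ _] joinV joinI aI v avz.
by case: (joinV _ _ joinI) => _ /(_ a aI v avz) <- _; rewrite act1.
Qed.

Lemma join_one_fix_exists {I : {set M}} {v} :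
  is_join le I one -> v != z -> exists2 a, a \in I & act a v = v.
Proof.
move=> joinI vz; case: repV => -[[gact1 _ _ _] act1 _ _ actEnd] joinV.
have [/existsP[a /andP[aI /eqP av]]|none] :=
  boolP [exists a, (a \in I) && (act a v == v)]; first by exists a.
have killI a : a \in I -> act a v = z.
  move=> aI; apply/eqP; apply: contraNT none => avz; apply/existsP; exists a.
  by rewrite aI (act_join_one_fix joinI aI) ?eqxx.
have leI a : a \in I -> endle z (act a) (kill_orbit v).
  move=> aI x axz; rewrite /kill_orbit (act_join_one_fix joinI aI) //.
  case: ifP => // /existsP[g /eqP xg]; move: axz.
  by rewrite xg; case: (actEnd a) => _ -> _; rewrite killI // act_zero_vec eqxx.
case: (joinV _ _ joinI) => _ _ /(_ _ (kill_orbit_is_end v) leI v).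
rewrite act1 /kill_orbit => /(_ vz); case: ifP => [_ zv|/existsP[]].
  by rewrite zv eqxx in vz.
by exists 1%g; rewrite gact1.
Qed.

Lemma act_orth_idem {E : {set M}} :
  complete_orth_idem mul one zero le E -> forall v, v != z ->
  exists2 e0, e0 \in E & forall e, e \in E -> act e v = if e == e0 then v else z.
Proof.
case: repV => -[_ _ actM act0 _] _ [orthE joinE] v vz.
have [e0 e0E e0v] := join_one_fix_exists joinE vz.
exists e0 => // e eE; case: eqP => [-> //|/eqP ne].
by rewrite -[v in act e v]e0v -actM orthE // (negbTE ne) act0.
Qed.

End IdempotentsOnRepresentations.

Theorem mainTheorem16 (gT : finGroupType) (Gab : abelian [set: gT])
  (M : finType) (mul : M -> M -> M) (one zero : M) (iota : gT -> M)
  (HM : hatG_linear_monoid mul one zero iota)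
  (le : rel M) (Hle : monoid_order mul zero le)
  (k : fieldType) :
  (* on objects: V (x) k is a k[M]-module killed by the defining relations
     of k[\mathcal M], i.e. a k[\mathcal M]-module *)
  (forall (V : finType) (z : V) (act : M -> V -> V),
     repM_obj mul one zero iota le z act ->
     [/\ forall a (c : k) (x y : tens k z),
           tmap z z (act a) (c *: x + y) = c *: tmap z z (act a) x + tmap z z (act a) y,
         forall x : tens k z, tmap z z (act one) x = x,
         forall a b (x : tens k z),
           tmap z z (act (mul a b)) x = tmap z z (act a) (tmap z z (act b) x)
       & forall a (E : {set M}), complete_orth_idem mul one zero le E ->
           forall x : tens k z,
             tmap z z (act a) x = \sum_(e in E) tmap z z (act (mul a e)) x /\
             tmap z z (act a) x = \sum_(e in E) tmap z z (act (mul e a)) x])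
  /\
  (* on morphisms: f (x) k is a module homomorphism *)
  (forall (V W : finType) (zV : V) (zW : W) (actV : M -> V -> V)
          (actW : M -> W -> W) (f : V -> W),
     repM_obj mul one zero iota le zV actV ->
     repM_obj mul one zero iota le zW actW ->
     rep_mor iota zV zW actV actW f ->
     [/\ forall (c : k) (x y : tens k zV),
           tmap zV zW f (c *: x + y) = c *: tmap zV zW f x + tmap zV zW f y
       & forall a (x : tens k zV),
           tmap zV zW f (tmap zV zV (actV a) x) = tmap zW zW (actW a) (tmap zV zW f x)]).
Proof.
split=> [V z act repV | V W zV zW actV actW f repV repW [[fz _ _] fact]].
  have [[_ act1 actM _ _] _] := repV.
  split=> [a|x|a b x|a E idemE x]; first exact: tmap_is_linear.
  - by rewrite (eq_tmap _ act1) tmap_id.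
  - by rewrite tmap_comp ?(act_zero_vec repV) //; apply: eq_tmap.
  have partE := act_orth_idem repV idemE.
  split; apply: tmap_sum_partition => v vz; have [e0 e0E e0v] := partE v vz.
    exists e0 => // e eE.
    by rewrite actM e0v //; case: eqP; rewrite ?(act_zero_vec repV).
  have [avz|/partE[e1 e1E e1v]] := eqVneq (act a v) z.
    by exists e0 => // e eE; rewrite actM avz (act_zero_vec repV); case: eqP.
  by exists e1 => // e eE; rewrite actM e1v.
split=> [|a x]; first exact: tmap_is_linear.
rewrite !tmap_comp ?(act_zero_vec repW) //.
by apply: eq_tmap => v /=; rewrite fact.
Qed.
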